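(* Let $p$ be a prime, $1\le e<p$, and define $f_n\in\mathbb{F}_p[c]$ by $f_1=c$ and $f_{n+1}=c^{p^n}-f_n^e$ for $n\ge1$. Then for all sufficiently large $n$ there is a nonzero prime ideal $\mathfrak{p}\subseteq\mathbb{F}_p[c]$ with $f_n\in\mathfrak{p}$ but $f_j\notin\mathfrak{p}$ for all $1\le j<n$. *)

From HB Require Import structures.
From mathcomp Require Import all_boot all_order all_algebra.
Set Implicit Arguments. Unset Strict Implicit. Unset Printing Implicit Defensive.
Import GRing.Theory.
Local Open Scope ring_scope.

(* fseq p e n = f_n in F_p[c] for n >= 1:  f_1 = c,  f_(m+1) = c^(p^m) - f_m^e.
   The value at index 0 is an irrelevant placeholder (0). *)
Fixpoint fseq (p e : nat) (n : nat) : {poly 'F_p} :=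
  match n with
  | 0 => 0
  | 1 => 'X
  | m.+1 => 'X ^+ (p ^ m)%N - (fseq p e m) ^+ e
  end.

(* S is a nonzero prime ideal of the commutative ring R (S is a decidable
   predicate; idealr_closed includes properness 1 \notin S). *)
Definition nonzero_prime_ideal (R : nzRingType) (S : {pred R}) : Prop :=
  [/\ idealr_closed S, prime_idealr_closed S & exists2 x, x \in S & x != 0].

From Stdlib Require Import Classical.
From HB Require Import structures.
From mathcomp Require Import all_boot all_order all_algebra.
From mathcomp Require Import zify.
Import GRing.Theory.
Set Implicit Arguments. Unset Strict Implicit.

(* By Frobenius, f_j divides f_(j+k) - f_k^(p^j), so an irreducible q dividing
   some f_n divides exactly the f_i with i a multiple of its rank r.  Since
   f_(n+1)' = -e f_n' f_n^(e-1) in characteristic p, the multiplicity of q in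
   f_n is at most e^((n-1)/r).  Hence if f_n had no primitive irreducible
   factor, it would divide the product of the f_r^(e^((n-1)/r)) over the proper
   divisors r of n, whose degree is at most the sum of the e^((n-1)/r) p^(r-1);
   for n >= p + 14 this sum is smaller than deg f_n = p^(n-1). *)

Lemma leq_exp2rW k m n : m <= n -> m ^ k <= n ^ k.
Proof. by case: k => [|k] le_mn; rewrite ?expn0 // leq_exp2r. Qed.

Lemma Bernoulli_expn x k : x ^ k * (x + k) <= x * (x + 1) ^ k.
Proof.
elim: k => [|k IHk]; first by rewrite !expn0; lia.
by rewrite !expnS; move: IHk; move: (x ^ k) ((x + 1) ^ k) => a b; nia.
Qed.

Lemma double_expn_le_succ x k : 0 < x -> x <= k -> 2 * x ^ k <= (x + 1) ^ k.
Proof.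
move=> x_gt0 le_xk; rewrite -(leq_pmul2l x_gt0); apply: leq_trans (Bernoulli_expn x k).
by move: (x ^ k) => a; nia.
Qed.

Lemma double_expn_pred_le p e n : 1 < p -> e < p -> p <= n -> 2 * e ^ n.-1 <= p ^ n.-1.
Proof.
move=> p_gt1 e_lt_p le_pn.
apply: leq_trans (_ : 2 * p.-1 ^ n.-1 <= _).
  by rewrite leq_mul2l leq_exp2rW ?orbT //; lia.
by have := @double_expn_le_succ p.-1 n.-1; rewrite addn1 prednK; [apply; lia | lia].
Qed.

Lemma mul8_exp2_le m : 6 <= m -> 8 * m.+1 <= 2 ^ m.
Proof.
elim: m => // m IHm; rewrite leq_eqVlt => /orP[/eqP <- // | lt6m].
by rewrite expnS; have := IHm lt6m; lia.
Qed.

Lemma proper_divisor_term_le p e r s : 1 < p -> e <= p -> 1 < r -> 1 < s ->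
  14 <= r * s -> 4 * (r * s) * (e ^ ((r * s).-1 %/ r) * p ^ r.-1) <= p ^ (r * s).-1.
Proof.
move=> p_gt1 le_ep r_gt1 s_gt1 rs_ge.
have -> : (r * s).-1 %/ r = s.-1.
  have -> : (r * s).-1 = s.-1 * r + r.-1 by lia.
  by rewrite divnMDl ?divn_small ?addn0; lia.
set m := r.-1 * s.-1.
have -> : (r * s).-1 = s.-1 + r.-1 + m by rewrite /m; nia.
have rs_le : 4 * (r * s) <= 2 ^ m by apply: leq_trans (@mul8_exp2_le m _); rewrite /m; nia.
have e_le : e ^ s.-1 <= p ^ s.-1 by exact: leq_exp2rW.
have two_le : 2 ^ m <= p ^ m by exact: leq_exp2rW.
rewrite !expnD; move: rs_le e_le two_le.
move: (4 * _) (e ^ _) (p ^ s.-1) (2 ^ m) (p ^ m) (p ^ r.-1) => a b c d g h *.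
have le_ag : a <= g by lia.
by rewrite mulnC -mulnA [c * h]mulnC mulnA leq_mul // mulnC leq_mul.
Qed.

Lemma sum_divisor_terms_lt p e n : 1 < p -> e < p -> 14 + p <= n ->
  \sum_(r < n | (0 < r) && (r %| n)) e ^ (n.-1 %/ r) * p ^ r.-1 < p ^ n.-1.
Proof.
move=> p_gt1 e_lt_p n_ge; have n_gt1 : 1 < n by lia.
rewrite (bigD1 (Ordinal n_gt1)) //= divn1 expn0 muln1.
set rest := \sum_(r < n | _) _.
have first_le := double_expn_pred_le p_gt1 e_lt_p (leq_trans (leq_addl 14 p) n_ge).
have rest_le : n * (4 * rest) <= n * p ^ n.-1.
  rewrite mulnCA !big_distrr /=; apply: leq_trans (_ : \sum_(r < n) p ^ n.-1 <= _).
    set P := fun r : 'I_n => ((0 < r) && (r %| n)) && (r != Ordinal n_gt1).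
    rewrite [X in _ <= X](bigID P) /=.
    apply: leq_trans (leq_addr _ _); apply: leq_sum => r /andP[/andP[r_gt0 r_dvd_n] r_neq1].
    have r_gt1 : 1 < r by move: r_neq1; rewrite -val_eqE /=; lia.
    have def_n : n = r * (n %/ r) by rewrite mulnC divnK.
    have s_gt1 : 1 < n %/ r.
      move: (ltn_ord r); rewrite {2}def_n.
      by case: (n %/ r) => [|[|s]]; rewrite ?muln0 ?muln1 ?ltnn.
    rewrite mulnA; have := proper_divisor_term_le p_gt1 (ltnW e_lt_p) r_gt1 s_gt1.
    by rewrite -def_n; apply; lia.
  by rewrite sum_nat_const card_ord.
rewrite leq_pmul2l in rest_le; last by lia.
have : 0 < p ^ n.-1 by rewrite expn_gt0; lia.
lia.
Qed.

Local Open Scope ring_scope.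

Section IrreduciblePolynomials.

Variable F : fieldType.
Implicit Types q d g h x y : {poly F}.

Lemma Gauss_dvdpr_irred q k x y : irreducible_poly q -> ~~ (q %| x) ->
  (q ^+ k %| x * y) = (q ^+ k %| y).
Proof.
move=> irr_q qNx; rewrite Gauss_dvdpr //.
by apply: coprimep_expl; rewrite irreducible_poly_coprime.
Qed.

Lemma Euclid_dvdpM q x y : irreducible_poly q -> (q %| x * y) = (q %| x) || (q %| y).
Proof.
move=> irr_q; have [q_x | qNx] := boolP (q %| x); first by rewrite dvdp_mulr.
by have := Gauss_dvdpr_irred 1 y irr_q qNx; rewrite !expr1.
Qed.

Lemma Euclid_dvdpX q x n : irreducible_poly q -> (q %| x ^+ n.+1) = (q %| x).
Proof.
move=> irr_q; elim: n => [|n IHn]; first by rewrite expr1.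
by rewrite exprS Euclid_dvdpM // IHn orbb.
Qed.

Lemma irredp_ndvd_expM q s t x y : irreducible_poly q ->
  ~~ (q ^+ s.+1 %| x) -> ~~ (q ^+ t.+1 %| y) -> ~~ (q ^+ (s + t).+1 %| x * y).
Proof.
move=> irr_q; have q_neq0 := irredp_neq0 irr_q.
elim: s x => [|s IHs] x qNx qNy.
  by rewrite add0n Gauss_dvdpr_irred // -(expr1 q).
have [/dvdpP[x1 def_x] | qNx1] := boolP (q %| x).
  move: qNx; rewrite def_x mulrAC addSn (exprSr q s.+1) (exprSr q (s + t).+1).
  by rewrite !dvdp_mul2r // => /IHs; apply.
rewrite Gauss_dvdpr_irred //; apply: contra qNy; apply: dvdp_trans.
by rewrite dvdp_exp2l // !ltnS leq_addl.
Qed.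

Lemma irredp_ndvd_exp q s x m : irreducible_poly q ->
  ~~ (q ^+ s.+1 %| x) -> ~~ (q ^+ (s * m).+1 %| x ^+ m).
Proof.
move=> irr_q qNx; elim: m => [|m IHm].
  by rewrite muln0 expr0 expr1 dvdp1 gtn_eqF // irr_q.1.
by rewrite (exprS x) mulnS; exact: irredp_ndvd_expM.
Qed.

Lemma dvdp_exp_deriv q k g : q ^+ k.+1 %| g -> q ^+ k %| g^`().
Proof.
case/dvdpP=> h ->; rewrite derivM deriv_exp /= dvdp_add ?dvdp_mull //.
  by rewrite dvdp_exp2l.
by rewrite -mulr_natl !dvdp_mull.
Qed.

Lemma irredp_factor g : (1 < size g)%N -> exists2 q, irreducible_poly q & q %| g.
Proof.
have [n] := ubnP (size g); elim: n g => // n IHn g /ltnSE le_gn g_gt1.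
have g_neq0 : g != 0 by rewrite -size_poly_gt0 ltnW.
case: (classic (exists2 d : {poly F}, (1 < size d < size g)%N & d %| g)).
  case=> d /andP[d_gt1 lt_dg] d_g; have [q irr_q q_d] := IHn d (leq_trans lt_dg le_gn) d_gt1.
  by exists q; last exact: dvdp_trans q_d d_g.
move=> no_proper; exists g => //; split=> // d d_neq1 d_g.
rewrite -dvdp_size_eqp // eqn_leq dvdp_leq //= leqNgt; apply/negP=> lt_dg.
apply: no_proper; exists d; rewrite // lt_dg andbT ltn_neqAle eq_sym d_neq1.
by rewrite size_poly_gt0 (dvdpN0 d_g).
Qed.

Lemma dvdp_irred_exp_local g h : g != 0 ->
  (forall q k, irreducible_poly q -> q ^+ k %| g -> q ^+ k %| h) -> g %| h.
Proof.
have [n] := ubnP (size g); elim: n g h => // n IHn g h /ltnSE le_gn g_neq0 local_gh.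
have [g_le1 | g_gt1] := leqP (size g) 1.
  have /eqp_dvdl -> : g %= 1 by rewrite -size_poly_eq1 eqn_leq g_le1 size_poly_gt0.
  exact: dvd1p.
have [q irr_q /dvdpP[g1 def_g]] := irredp_factor g_gt1.
have q_neq0 := irredp_neq0 irr_q.
have /dvdpP[h1 def_h] : q %| h.
  by have := local_gh q 1%N irr_q; rewrite !expr1; apply; rewrite def_g dvdp_mull.
have g1_neq0 : g1 != 0 by apply: contraNneq g_neq0; rewrite def_g => ->; rewrite mul0r.
rewrite def_g def_h dvdp_mul2r //; apply: IHn => // [|s k irr_s s_g1].
  have := irr_q.1; move: le_gn; rewrite def_g size_mul //.
  by set a := size g1; set b := size q; lia.
have [s_q | sNq] := boolP (s %| q).
  have eq_sq : s %= q by apply: irr_q; rewrite // gtn_eqF // irr_s.1.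
  have := local_gh s k.+1 irr_s; rewrite def_g def_h !exprSr.
  rewrite -!(eqp_dvdr _ (eqp_mull _ eq_sq)) !dvdp_mul2r ?irredp_neq0 //; exact.
have sk_coprime_q : coprimep (s ^+ k) q.
  by apply: coprimep_expl; rewrite irreducible_poly_coprime.
by rewrite -(Gauss_dvdpl h1 sk_coprime_q) -def_h local_gh // def_g dvdp_mulr.
Qed.

Lemma irredp_nonzero_prime_ideal q : irreducible_poly q ->
  nonzero_prime_ideal (fun x => q %| x).
Proof.
move=> irr_q; split.
- split; first by rewrite unfold_in dvdp0.
    by rewrite unfold_in dvdp1 gtn_eqF // irr_q.1.
  by move=> a x y; rewrite !unfold_in => q_x q_y; rewrite dvdp_add // dvdp_mull.
- by move=> x y; rewrite !unfold_in Euclid_dvdpM.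
- by exists q; rewrite ?unfold_in ?dvdpp ?irredp_neq0.
Qed.

End IrreduciblePolynomials.

Lemma exprBn_pchar (R : comNzRingType) (x y : R) n :
  [pchar R].-nat n -> (x - y) ^+ n = x ^+ n - y ^+ n.
Proof. by move=> pchar_n; rewrite exprDn_pchar // exprNn_pchar. Qed.

Lemma Fp_natr_neq0 p m : prime p -> (0 < m < p)%N -> (m%:R : 'F_p) != 0.
Proof.
move=> p_pr /andP[m_gt0 lt_mp]; rewrite -(dvdn_pcharf (pchar_Fp p_pr)).
by apply/negP=> /(dvdn_leq m_gt0); rewrite leqNgt lt_mp.
Qed.

Lemma pchar_poly_Fp p : prime p -> p \in [pchar {poly 'F_p}].
Proof. by move=> p_pr; rewrite pchar_poly pchar_Fp. Qed.

Section PrimitiveDivisors.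

Variables p e : nat.
Hypotheses (p_pr : prime p) (e_gt0 : (0 < e)%N) (e_lt_p : (e < p)%N).
Local Notation f := (fseq p e).

Lemma fseqS m : (0 < m)%N -> f m.+1 = 'X ^+ (p ^ m) - f m ^+ e.
Proof. by case: m. Qed.

Lemma size_fseq n : (0 < n)%N -> size (f n) = (p ^ n.-1).+1.
Proof.
elim: n => // -[|n] IHn _; first by rewrite size_polyX.
rewrite fseqS // size_polyDl ?size_polyXn // size_polyN.
apply: leq_ltn_trans (size_poly_exp_leq _ _) _; rewrite IHn //= ltnS.
by rewrite expnS mulnC ltn_pmul2r ?expn_gt0 ?prime_gt0.
Qed.

Lemma fseq_neq0 n : (0 < n)%N -> f n != 0.
Proof. by move=> n_gt0; rewrite -size_poly_gt0 size_fseq. Qed.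

Lemma fseq_dvd_sub_pexp j k : (0 < j)%N -> (0 < k)%N ->
  f j %| f (j + k) - f k ^+ (p ^ j).
Proof.
have pchar_pj : [pchar {poly 'F_p}].-nat (p ^ j)%N.
  by rewrite (eq_pnat _ (pcharf_eq (pchar_poly_Fp p_pr))) pnatX pnat_id ?orbT.
move=> j_gt0; elim: k => // -[_ _ | k IHk _].
  by rewrite addn1 fseqS //= addrAC subrr add0r dvdpNr dvdp_exp ?dvdpp.
rewrite addnS (fseqS (m := j + k.+1)) ?addn_gt0 ?j_gt0 // (fseqS (m := k.+1)) //.
rewrite exprBn_pchar // -!exprM -expnD (addnC k.+1 j) opprB addrC addrA subrK.
by rewrite mulnC exprM -opprB dvdpNr subrXX dvdp_mulr // IHk.
Qed.

Lemma deriv_fseqS n : (0 < n)%N -> (f n.+1)^`() = - ((f n)^`() * f n ^+ e.-1 *+ e).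
Proof.
move=> n_gt0; rewrite fseqS // derivB derivXn deriv_exp -mulr_natr natrX.
by rewrite (pcharf0 (pchar_poly_Fp p_pr)) expr0n gtn_eqF ?mulr0 ?sub0r.
Qed.

Lemma fseq_dvd_shift q k i : irreducible_poly q -> (0 < k)%N -> (0 < i)%N ->
  q %| f k -> (q %| f (k + i)) = (q %| f i).
Proof.
move=> irr_q k_gt0 i_gt0 q_fk.
have q_diff : q %| f (k + i) - f i ^+ (p ^ k).
  exact: dvdp_trans q_fk (fseq_dvd_sub_pexp k_gt0 i_gt0).
rewrite -(subrK (f i ^+ (p ^ k)) (f (k + i))) dvdp_addr //.
have pk_gt0 : (0 < p ^ k)%N by rewrite expn_gt0 prime_gt0.
by rewrite -(prednK pk_gt0) Euclid_dvdpX.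
Qed.

Lemma fseq_rank q n : irreducible_poly q -> (0 < n)%N -> q %| f n ->
  exists2 r, (0 < r)%N & forall i, (0 < i)%N -> (q %| f i) = (r %| i)%N.
Proof.
move=> irr_q n_gt0 q_fn.
have ex_r : exists i, (0 < i)%N && (q %| f i) by exists n; rewrite n_gt0.
case: (ex_minnP ex_r) => r /andP[r_gt0 q_fr] r_min; exists r => //.
elim/ltn_ind=> i IHi i_gt0.
case: (ltngtP i r) => [lt_ir | lt_ri | ->]; last by rewrite q_fr dvdnn.
  rewrite gtnNdvd //; apply/negP=> q_fi.
  by have := r_min i; rewrite i_gt0 q_fi leqNgt lt_ir => /(_ isT).
rewrite -(subnKC (ltnW lt_ri)) fseq_dvd_shift ?subn_gt0 // dvdn_addr //.
by apply: IHi; rewrite ?subn_gt0 // ltn_subrL r_gt0.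
Qed.

(* Bounding the multiplicity in f_n' as well makes the induction work, since a
   factor of multiplicity k + 1 in g has multiplicity at least k in g'. *)
Lemma fseq_valuation q r : irreducible_poly q -> (0 < r)%N ->
    (forall i, (0 < i)%N -> (q %| f i) = (r %| i)%N) ->
  forall n, (0 < n)%N ->
  ~~ (q ^+ (e ^ (n.-1 %/ r)).+1 %| f n) /\ ~~ (q ^+ (e ^ (n.-1 %/ r)) %| (f n)^`()).
Proof.
move=> irr_q r_gt0 rank_q; have q_gt1 := irr_q.1.
elim=> // -[_ _ | n IHn _].
  rewrite div0n expn0 /= derivX expr1 dvdp1 gtn_eqF //; split=> //.
  apply/negP=> /dvdp_leq; rewrite polyX_eq0 size_polyX expr2 size_mul ?irredp_neq0 //.
  by set s := size q; lia.
have [fn_ndvd dfn_ndvd] := IHn isT; rewrite /= in fn_ndvd dfn_ndvd.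
set D := (e ^ (n %/ r))%N in fn_ndvd dfn_ndvd.
have D_gt0 : (0 < D)%N by rewrite expn_gt0 e_gt0.
set v := if q %| f n.+1 then D else 0%N.
have fn_ndvd' : ~~ (q ^+ v.+1 %| f n.+1) by rewrite /v; case: ifP => // /negbT; rewrite expr1.
have dfn_ndvd' : ~~ (q ^+ D.-1.+1 %| (f n.+1)^`()) by rewrite prednK.
have := irredp_ndvd_expM irr_q dfn_ndvd' (irredp_ndvd_exp e.-1 irr_q fn_ndvd').
have -> : (D.-1 + v * e.-1).+1 = (e ^ (n.+1 %/ r))%N.
  by rewrite divnS // -rank_q // expnD /v; case: ifP => _; rewrite ?expn1 ?expn0; nia.
move=> dfn1_ndvd; have dfn2_ndvd : ~~ (q ^+ (e ^ (n.+1 %/ r)) %| (f n.+2)^`()).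
  rewrite deriv_fseqS // dvdpNr -mulr_natl -polyC_natr mul_polyC dvdpZr //.
  by rewrite Fp_natr_neq0 ?e_gt0.
by split=> //; apply: contra dfn2_ndvd; exact: dvdp_exp_deriv.
Qed.

Definition fseq_divisor_prod n :=
  \prod_(r < n | (0 < r)%N && (r %| n)%N) f r ^+ (e ^ (n.-1 %/ r)).

Lemma fseq_dvd_divisor_prod n : (0 < n)%N ->
    (forall q, irreducible_poly q -> q %| f n -> exists2 j, (0 < j < n)%N & q %| f j) ->
  f n %| fseq_divisor_prod n.
Proof.
move=> n_gt0 old_divisors; apply: dvdp_irred_exp_local => [|q [|k] irr_q qk_fn].
- exact: fseq_neq0.
- by rewrite expr0 dvd1p.
have q_fn : q %| f n by apply: dvdp_trans qk_fn; rewrite dvdp_exp ?dvdpp.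
have [r r_gt0 rank_q] := fseq_rank irr_q n_gt0 q_fn.
have [j /andP[j_gt0 lt_jn] q_fj] := old_divisors q irr_q q_fn.
have r_dvd_n : (r %| n)%N by rewrite -rank_q.
have lt_rn : (r < n)%N by apply: leq_ltn_trans lt_jn; apply: dvdn_leq; rewrite -?rank_q.
have lt_k : (k < e ^ (n.-1 %/ r))%N.
  rewrite ltnNge; apply: contra (fseq_valuation irr_q r_gt0 rank_q n_gt0).1 => le_k.
  by apply: dvdp_trans qk_fn; rewrite dvdp_exp2l.
rewrite /fseq_divisor_prod (bigD1 (Ordinal lt_rn)) /= ?r_gt0 // dvdp_mulr //.
by apply: dvdp_trans (dvdp_exp2l q lt_k) _; rewrite dvdp_exp2r ?rank_q.
Qed.

Lemma size_fseq_divisor_prod n :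
  (size (fseq_divisor_prod n) <=
   (\sum_(r < n | (0 < r) && (r %| n)) e ^ (n.-1 %/ r) * p ^ r.-1).+1)%N.
Proof.
apply: leq_trans (size_poly_prod_leq _ _) _.
rewrite leq_subLR addnS ltnS -sum1_card -big_split /=.
apply: leq_sum => r /andP[r_gt0 _]; rewrite add1n mulnC.
by apply: leq_trans (size_poly_exp_leq _ _) _; rewrite size_fseq.
Qed.

Lemma fseq_primitive_divisor n : (14 + p <= n)%N ->
  exists q, [/\ irreducible_poly q, q %| f n & forall j, (0 < j < n)%N -> ~~ (q %| f j)].
Proof.
move=> n_ge; have n_gt0 : (0 < n)%N by lia.
apply: NNPP => no_primitive.
have old_divisors q : irreducible_poly q -> q %| f n -> exists2 j, (0 < j < n)%N & q %| f j.
  move=> irr_q q_fn; apply: NNPP => q_new; apply: no_primitive; exists q.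
  by split=> // j lt_jn; apply/negP=> q_fj; apply: q_new; exists j.
have prod_neq0 : fseq_divisor_prod n != 0.
  by apply/prodf_neq0 => r /andP[r_gt0 _]; rewrite expf_neq0 ?fseq_neq0.
have := dvdp_leq prod_neq0 (fseq_dvd_divisor_prod n_gt0 old_divisors).
move/leq_trans/(_ (size_fseq_divisor_prod n)); rewrite size_fseq // ltnS leqNgt.
by rewrite sum_divisor_terms_lt ?prime_gt1.
Qed.

End PrimitiveDivisors.

Theorem lemma5p4 (p e : nat) (hp : prime p) (he1 : (1 <= e)%N) (hep : (e < p)%N) :
  exists N : nat, forall n : nat, (N <= n)%N ->
    exists S : {pred {poly 'F_p}},
      nonzero_prime_ideal S /\ fseq p e n \in S /\
      (forall j : nat, (1 <= j)%N -> (j < n)%N -> fseq p e j \notin S).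
Proof.
exists (14 + p)%N => n n_ge.
have [q [irr_q q_fn q_new]] := fseq_primitive_divisor hp he1 hep n_ge.
exists (fun x => q %| x); split; first exact: irredp_nonzero_prime_ideal.
by split=> [|j j_gt0 lt_jn]; rewrite unfold_in ?q_new ?j_gt0.
Qed.
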